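(* Let $\Lambda\subset\mathbb{Z}^n$ be an antichain lattice and $A\subset\mathbb{Z}^n$ a generic $\Lambda$-finite set. Then the algebraic Scarf complex $\mathcal{F}_{N(A)}$ is isomorphic to a subcomplex of the hull complex $\mathrm{hull}(A)$; that is, for all sufficiently large $t$, for every $\sigma\in N(A)$ the set $\mathrm{conv}(E_t(\sigma))$ is a face of $\mathcal{P}_t(A)$, and $\sigma\mapsto E_t(\sigma)$ identifies $N(A)$ (with labels $\vee\sigma$) with a labeled subcomplex of $\mathrm{hull}(A)$.
   Context: Notation: $\le$, $\ll$, $\vee$ componentwise on $\mathbb{Z}^n$; antichain lattice = subgroup of $\mathbb{Z}^n$ whose distinct elements are pairwise incomparable. $T_\eta=\eta-\mathbb{N}^n$, $T^o_\eta=\{\beta:\beta\ll\eta\}$; the $X$-face ($\emptyset\neq X\subseteq[n]$) of $T_\eta$ is $\{\alpha\in T_\eta:\alpha_i=\eta_i\ \forall i\in X\}$. $A$ is generic if whenever $T^o_\eta\cap A=\emptyset$, each face of $T_\eta$ contains at most one point of $A$. $A$ is $\Lambda$-finite if $A=A+\Lambda$ and $A=A_0+\Lambda$ for a finite $A_0$. A finite nonempty $B\subseteq A$ is strongly neighborly if $B'\subseteq A$, $\vee B'=\vee B$ imply $B'=B$; $N(A)$ is the simplicial complex of strongly neighborly sets, each face $\sigma$ labeled by $\vee\sigma$. The algebraic Scarf complex $\mathcal{F}_{N(A)}$: free $S=k[x_1,\dots,x_n]$-modules with bases $\{e_\sigma:\sigma\in N(A),|\sigma|=i+1\}$ and differential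 $e_\sigma\mapsto\sum_j(-1)^jX^{\vee\sigma-\vee\partial_j\sigma}e_{\partial_j\sigma}$. For real $t>1$ and $\alpha\in\mathbb{Z}^n$, $E_t(\alpha)=(t^{\alpha_1},\dots,t^{\alpha_n})$, $E_t(F)=\{E_t(\alpha):\alpha\in F\}$, $\mathcal{P}_t(A)=\mathbb{R}^n_{\ge0}+\mathrm{conv}(E_t(A))$. $\mathrm{hull}_t(A)$ is the collection of $F\subseteq A$ such that $\mathrm{conv}(E_t(F))$ is a face of $\mathcal{P}_t(A)$ (labeled by $\vee F$); for generic $A$ this is independent of $t$ for $t$ large, and $\mathrm{hull}(A)$ denotes this stable complex. *)

From HB Require Import structures.
From mathcomp Require Import all_boot all_order all_algebra.
From mathcomp Require Import finmap.
From mathcomp Require Import reals.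
Set Implicit Arguments. Unset Strict Implicit. Unset Printing Implicit Defensive.
Import Order.TTheory GRing.Theory Num.Theory.
Local Open Scope ring_scope.


Definition zvec (n : nat) := {ffun 'I_n -> int}.

Definition zle n (a b : zvec n) : Prop := forall i, a i <= b i.

Definition vee n (B : {fset zvec n}) : zvec n :=
  [ffun i => \big[Num.max/(head 0 (B : seq (zvec n))) i]_(a <- (B : seq (zvec n))) a i].

Definition antichain_lattice n (L : zvec n -> Prop) : Prop :=
  [/\ L 0,
      (forall x y, L x -> L y -> L (x + y)),
      (forall x, L x -> L (- x)) &
      (forall x y, L x -> L y -> x <> y -> ~ zle x y)].

Definition lattice_finite n (L A : zvec n -> Prop) : Prop :=
  (forall a l, A a -> L l -> A (a + l)) /\
  (exists A0 : {fset zvec n},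
      forall x, A x <-> exists2 a0, a0 \in A0 & exists2 l, L l & x = a0 + l).

Definition generic n (A : zvec n -> Prop) : Prop :=
  forall eta : zvec n,
    (forall b, A b -> ~ (forall i, b i < eta i)) ->
    forall X : {set 'I_n}, X != set0 ->
    forall a b, A a -> A b ->
      zle a eta -> zle b eta ->
      (forall i, i \in X -> a i = eta i) ->
      (forall i, i \in X -> b i = eta i) ->
      a = b.

(* strongly neighborly sets; N(A) is the collection of these *)
Definition strongly_neighborly n (A : zvec n -> Prop) (B : {fset zvec n}) : Prop :=
  [/\ B != fset0%fset,
      (forall a, a \in B -> A a) &
      (forall B' : {fset zvec n}, B' != fset0%fset -> (forall a, a \in B' -> A a) ->
         vee B' = vee B -> B' = B)].

Definition Et (R : realType) n (t : R) (a : zvec n) : 'I_n -> R :=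
  fun i => t ^ (a i).

Definition dotR (R : realType) n (w x : 'I_n -> R) : R := \sum_i w i * x i.

Definition in_conv (R : realType) n (t : R) (S : zvec n -> Prop) (x : 'I_n -> R) : Prop :=
  exists F : {fset zvec n},
    (forall a, a \in F -> S a) /\
    exists lam : zvec n -> R,
      [/\ (forall a, a \in F -> 0 <= lam a),
          \sum_(a <- (F : seq (zvec n))) lam a = 1 &
          forall i, x i = \sum_(a <- (F : seq (zvec n))) lam a * Et t a i].

(* P_t(A) = R^n_{>=0} + conv(E_t(A)) *)
Definition Pt (R : realType) n (t : R) (A : zvec n -> Prop) (x : 'I_n -> R) : Prop :=
  exists2 y, in_conv t A y & forall i, y i <= x i.

(* Q is a (nonempty, exposed) face of the convex set P *)
Definition is_face (R : realType) n (P Q : ('I_n -> R) -> Prop) : Prop :=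
  exists (w : 'I_n -> R) (c : R),
    [/\ (forall x, P x -> c <= dotR w x),
        (forall x, Q x <-> P x /\ dotR w x = c) &
        exists x, Q x].

Definition in_hull (R : realType) n (t : R) (A : zvec n -> Prop) (F : {fset zvec n}) : Prop :=
  (forall a, a \in F -> A a) /\
  is_face (Pt t A) (in_conv t (fun a => a \in F)).

(* E_t(F) is affinely independent, i.e. conv(E_t(F)) is a simplex with vertex set E_t(F) *)
Definition aff_indep (R : realType) n (t : R) (F : {fset zvec n}) : Prop :=
  forall mu : zvec n -> R,
    \sum_(a <- (F : seq (zvec n))) mu a = 0 ->
    (forall i, \sum_(a <- (F : seq (zvec n))) mu a * Et t a i = 0) ->
    forall a, a \in F -> mu a = 0.

(* Let m be the join of a strongly neighborly set sigma.  Every a in sigma attains m in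
   some coordinate, genericity makes the point of sigma attaining m_j unique (the owner
   of j), and every b in A outside sigma exceeds m in some coordinate.  After rescaling
   coordinate j by t^(-m_j), a point a of sigma has entries 1 on the coordinates it owns
   and at most 1/t elsewhere, while b has some entry at least t.  For t large compared
   with n this near-identity pattern gives a positive functional w with <w, E_t a> = 1
   on sigma (solving a diagonally dominant system) and <w, E_t b> > 1 off sigma, so w
   exposes conv E_t(sigma) as a face of P_t(A); the same dominance makes E_t(sigma)
   linearly independent.  The threshold depends on n only, hence is uniform in sigma. *)

From HB Require Import structures.
From mathcomp Require Import all_boot all_order all_algebra.
From mathcomp Require Import finmap.
From mathcomp Require Import reals.
From mathcomp Require Import lra.
Import Order.TTheory GRing.Theory Num.Theory.
Local Open Scope ring_scope.
Set Implicit Arguments. Unset Strict Implicit.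

Section Join.
Variable n : nat.
Implicit Types (B : {fset zvec n}) (a m : zvec n).

Lemma vee_ub B a : a \in B -> zle a (vee B).
Proof. by move=> aB i; rewrite /vee ffunE (le_bigmax_seq _ _ _ _ aB). Qed.

Lemma vee_attained B i : B != fset0%fset -> exists2 a, a \in B & a i = vee B i.
Proof.
case/fset0Pn=> b bB; rewrite /vee ffunE big_seq.
apply: (big_ind (fun x => exists2 a, a \in B & a i = x)) => [|x y [a aB <-] [c cB <-]|a aB].
- suff head_mem (s : seq (zvec n)) : b \in s -> head 0 s \in s.
    by exists (head 0 (B : seq (zvec n))); rewrite // head_mem.
  by case: s => // c s _; rewrite mem_head.
- by case: leP => _; [exists c | exists a].
- by exists a.
Qed.

Lemma vee_eq B m : B != fset0%fset -> (forall a, a \in B -> zle a m) ->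
  (forall i, exists2 a, a \in B & a i = m i) -> vee B = m.
Proof.
move=> B0 le_m attained; apply/ffunP => i; apply: le_anti; apply/andP; split.
  by have [a aB <-] := vee_attained i B0; apply: le_m.
by have [a aB <-] := attained i; apply: vee_ub.
Qed.

End Join.

Section StronglyNeighborly.
Variables (n : nat) (A : zvec n -> Prop) (sigma : {fset zvec n}).
Hypothesis sn : strongly_neighborly A sigma.

Lemma sn_neq0 : sigma != fset0%fset.
Proof. by case: sn. Qed.

Lemma sn_sub : forall a, a \in sigma -> A a.
Proof. by case: sn. Qed.

Lemma sn_mem_le_vee b : A b -> zle b (vee sigma) -> b \in sigma.
Proof.
move=> Ab b_le; case: sn => sigma0 _ sn_max.
have b_sigma0 : (b |` sigma)%fset != fset0%fset by apply/fset0Pn; exists b; rewrite fsetU11.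
suff <- : (b |` sigma)%fset = sigma by rewrite fsetU11.
apply: sn_max => // [a|].
  by rewrite in_fset1U => /predU1P[->|/sn_sub].
apply: vee_eq => // [a|i].
  by rewrite in_fset1U => /predU1P[->|/vee_ub].
by have [a aS ai] := vee_attained i sigma0; exists a; rewrite // in_fset1U aS orbT.
Qed.

Lemma sn_attains_vee a : (0 < n)%N -> a \in sigma -> exists j, a j = vee sigma j.
Proof.
move=> n_gt0 aS; suff /existsP[j /eqP] : [exists j, a j == vee sigma j] by exists j.
apply: contraT; rewrite negb_exists => /forallP a_neq.
have attained j : exists2 c, c \in (sigma `\ a)%fset & c j = vee sigma j.
  have [c cS cj] := vee_attained j sn_neq0.
  exists c => //; rewrite in_fsetD1 cS andbT.
  by apply: contraTneq (a_neq j) => <-; rewrite cj eqxx.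
have sigma_a0 : (sigma `\ a)%fset != fset0%fset.
  by apply/fset0Pn; have [c cS _] := attained (Ordinal n_gt0); exists c.
case: sn => _ _ sn_max.
suff E : (sigma `\ a)%fset = sigma by move: aS; rewrite -E in_fsetD1 eqxx.
apply: sn_max => // [c|].
  by rewrite in_fsetD1 => /andP[_ /sn_sub].
by apply: vee_eq => // c; rewrite in_fsetD1 => /andP[_ /vee_ub].
Qed.

Lemma sn_not_mem_gt_vee b : A b -> b \notin sigma -> exists i, vee sigma i < b i.
Proof.
move=> Ab bS; suff /existsP[i lt_i] : [exists i, vee sigma i < b i] by exists i.
apply: contraNT bS; rewrite negb_exists => /forallP b_le.
by apply: sn_mem_le_vee => // i; rewrite leNgt b_le.
Qed.

Hypothesis gen : generic A.

Lemma sn_vee_attained_uniq a b j : a \in sigma -> b \in sigma ->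
  a j = vee sigma j -> b j = vee sigma j -> a = b.
Proof.
move=> aS bS aj bj; apply: (@gen (vee sigma) _ [set j]) => //.
- move=> c Ac c_lt.
  have cS : c \in sigma by apply: sn_mem_le_vee => // i; apply: ltW.
  have [k ck] := sn_attains_vee (leq_ltn_trans (leq0n j) (ltn_ord j)) cS.
  by move: (c_lt k); rewrite ck ltxx.
- by apply/set0Pn; exists j; rewrite inE.
1,2: exact: sn_sub.
1,2: exact: vee_ub.
1,2: by move=> i; rewrite inE => /eqP->.
Qed.

End StronglyNeighborly.

Definition vee_owner n (sigma : {fset zvec n}) (j : 'I_n) : zvec n :=
  nth 0 sigma (find (fun a : zvec n => a j == vee sigma j) sigma).

Definition owned n (sigma : {fset zvec n}) (a : zvec n) : {set 'I_n} :=
  [set j | vee_owner sigma j == a].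

Section VeeOwner.
Variables (n : nat) (A : zvec n -> Prop) (sigma : {fset zvec n}).
Hypotheses (sn : strongly_neighborly A sigma) (gen : generic A).

Lemma vee_ownerP j : vee_owner sigma j \in sigma /\ vee_owner sigma j j = vee sigma j.
Proof.
have [a aS aj] := vee_attained j (sn_neq0 sn).
have has_j : has (fun a : zvec n => a j == vee sigma j) sigma.
  by apply/hasP; exists a; rewrite ?aj.
by split; [apply: mem_nth; rewrite -has_find | apply/eqP; exact: (nth_find 0 has_j)].
Qed.

Lemma vee_ownerE a j : a \in sigma -> a j = vee sigma j -> vee_owner sigma j = a.
Proof.
by move=> aS aj; have [oS oj] := vee_ownerP j; apply: (sn_vee_attained_uniq sn gen oS aS oj aj).
Qed.

Lemma mem_owned a j : a \in sigma -> (j \in owned sigma a) = (a j == vee sigma j).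
Proof.
move=> aS; rewrite inE; apply/eqP/eqP => [<-|/(vee_ownerE aS)//].
exact: (vee_ownerP j).2.
Qed.

Lemma owned_neq0 a : (0 < n)%N -> a \in sigma -> owned sigma a != set0.
Proof.
move=> n_gt0 aS; have [j aj] := sn_attains_vee sn n_gt0 aS.
by apply/set0Pn; exists j; rewrite mem_owned // aj.
Qed.

Lemma sum_le_sum_vee_owner (R : numDomainType) (g : zvec n -> R) :
  (0 < n)%N -> (forall a, 0 <= g a) ->
  \sum_(a <- sigma) g a <= \sum_j g (vee_owner sigma j).
Proof.
move=> n_gt0 g_ge0.
have -> : \sum_j g (vee_owner sigma j) = \sum_(a <- sigma) \sum_(j in owned sigma a) g a.
  under [RHS]eq_bigr do rewrite big_mkcond.
  rewrite exchange_big; apply: eq_bigr => j _.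
  rewrite (bigD1_seq _ (vee_ownerP j).1) ?fset_uniq //= inE eqxx big1 ?addr0 //.
  by move=> a; rewrite inE eq_sym => /negPf->.
rewrite big_seq [X in _ <= X]big_seq; apply: ler_sum => a aS.
have /set0Pn[j ja] := owned_neq0 n_gt0 aS.
by rewrite (bigD1 j) //= lerDl sumr_ge0.
Qed.

End VeeOwner.

Lemma eq0_le_mul_lt1 (R : numDomainType) (c s : R) : 0 <= s -> c < 1 -> s <= c * s -> s = 0.
Proof.
rewrite le_eqVlt => /predU1P[<-//|s_gt0] c_lt1.
by rewrite ler_pMl // lt_geF.
Qed.

Section NearIdentitySystem.
Variables (R : realFieldType) (n : nat) (E : 'I_n -> 'I_n -> R) (eps : R).
Hypothesis E_bound : forall j l, 0 <= E j l <= eps.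

Section Solution.
Variables r x : 'I_n -> R.
Hypothesis x_sol : forall j, x j + \sum_l E j l * x l = r j.

Lemma near_id_dist j : `|x j - r j| <= eps * \sum_l `|x l|.
Proof.
rewrite -(x_sol j) opprD addNKr normrN mulr_sumr.
apply: le_trans (ler_norm_sum _ _ _) _; apply: ler_sum => l _.
have /andP[E_ge0 E_le] := E_bound j l.
by rewrite normrM (ger0_norm E_ge0) ler_wpM2r.
Qed.

Lemma near_id_ge j : r j - eps * \sum_l `|x l| <= x j.
Proof. exact/ler_distlCBl/near_id_dist. Qed.

Lemma near_id_sum_le : \sum_l `|x l| <= \sum_l `|r l| + n%:R * eps * \sum_l `|x l|.
Proof.
have -> : n%:R * eps * \sum_l `|x l| = \sum_(j < n) eps * \sum_l `|x l|.
  by rewrite sumr_const card_ord -mulrA mulr_natl.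
rewrite -big_split /=; apply: ler_sum => j _.
by rewrite -lerBlDl; apply: le_trans (near_id_dist j); exact: lerB_dist.
Qed.

Lemma near_id_sum_le2 : 2 * (n%:R * eps) <= 1 -> \sum_l `|x l| <= 2 * \sum_l `|r l|.
Proof.
have := near_id_sum_le; have : 0 <= \sum_l `|x l| by apply: sumr_ge0.
set S := \sum_l `|x l|; set k := n%:R * eps; nra.
Qed.

End Solution.

Lemma near_id_solvable r : n%:R * eps < 1 ->
  exists x, forall j, x j + \sum_l E j l * x l = r j.
Proof.
move=> small.
pose B : 'M[R]_n := \matrix_(l, j) ((l == j)%:R + E j l).
have mulB (v : 'rV[R]_n) j : (v *m B) 0 j = v 0 j + \sum_l E j l * v 0 l.
  rewrite mxE; under eq_bigr do rewrite mxE mulrDr mulrC.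
  rewrite big_split /= (bigD1 j) //= eqxx mul1r big1 ?addr0 => [|l /negPf->].
    by congr (_ + _); apply: eq_bigr => l _; rewrite mulrC.
  by rewrite mul0r.
have B_unit : B \in unitmx.
  rewrite unitmxE unitfE; apply/negP => /det0P[v v_neq0 vB0].
  have v_sol j : v 0 j + \sum_l E j l * v 0 l = 0 by rewrite -mulB vB0 mxE.
  have S0 : \sum_l `|v 0 l| = 0.
    apply: (eq0_le_mul_lt1 (sumr_ge0 _ (fun l _ => normr_ge0 _)) small).
    by have := near_id_sum_le v_sol; rewrite normr0 big1_eq add0r.
  case/negP: v_neq0; apply/eqP/matrixP => i j; rewrite ord1 mxE.
  by apply/normr0_eq0; apply: (psumr_eq0P (fun l _ => normr_ge0 (v 0 l)) S0).
exists (fun l => ((\row_j r j) *m invmx B) 0 l) => j.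
by rewrite -mulB mulmxKV // mxE.
Qed.

End NearIdentitySystem.

Lemma exprz_le_inv (R : realFieldType) (t : R) (e : int) : 1 < t -> e < 0 -> t ^ e <= t^-1.
Proof. by move=> t_gt1 e_lt0; rewrite -exprN1 ler_eXz2l. Qed.

Lemma exprz_ge_self (R : realFieldType) (t : R) (e : int) : 1 < t -> 0 < e -> t <= t ^ e.
Proof. by move=> t_gt1 e_gt0; rewrite -{1}(expr1z t) ler_eXz2l. Qed.

Lemma dotR_Et_shift (R : realType) n (t : R) (m b : zvec n) (x : 'I_n -> R) : t != 0 ->
  dotR (fun j => t ^ (- m j) * x j) (Et t b) = \sum_j t ^ (b j - m j) * x j.
Proof.
move=> t_neq0; apply: eq_bigr => j _.
by rewrite /Et mulrAC -expfzDr // addrC.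
Qed.

(* Summing row j of x + E x = r over the coordinates j owned by a, with r j the inverse
   of the number of coordinates owned by the owner of j, yields <w, E_t a> = 1 for the
   weights w j = t^(-m_j) x_j (dot_weights_mem). *)
Definition weight_matrix (R : realFieldType) n (sigma : {fset zvec n}) (t : R) (j l : 'I_n) :
    R :=
  let a := vee_owner sigma j in
  if l \in owned sigma a then 0 else t ^ (a l - vee sigma l) / #|owned sigma a|%:R.

Section Weights.
Variables (R : realType) (n : nat) (A : zvec n -> Prop) (sigma : {fset zvec n}) (t : R).
Hypotheses (sn : strongly_neighborly A sigma) (gen : generic A) (n_gt0 : (0 < n)%N).
Hypothesis t_large : 2 * n%:R ^+ 2 + n%:R < t.

Local Notation m := (vee sigma).
Local Notation own := (vee_owner sigma).
Local Notation share j := (#|owned sigma (own j)|%:R : R).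

Let n_ge1 : 1 <= n%:R :> R.
Proof. by rewrite ler1n. Qed.

Let t_gt1 : 1 < t.
Proof. by apply: le_lt_trans t_large; have := n_ge1; nra. Qed.

Let t_gt0 : 0 < t.
Proof. exact: lt_trans t_gt1. Qed.

Lemma share_ge1 j : 1 <= share j.
Proof. by rewrite ler1n card_gt0; apply/set0Pn; exists j; rewrite inE. Qed.

Lemma share_gt0 j : 0 < share j.
Proof. exact: lt_le_trans ltr01 (share_ge1 j). Qed.

Lemma share_le j : share j <= n%:R.
Proof. by rewrite ler_nat -[leqRHS]card_ord max_card. Qed.

Lemma weight_matrix_bound j l : 0 <= weight_matrix sigma t j l <= t^-1.
Proof.
rewrite /weight_matrix; case: ifPn => [_|l_out]; first by rewrite lexx invr_ge0 ltW.
have [oS _] := vee_ownerP sn j.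
have own_lt : own j l < m l.
  by rewrite lt_neqAle -(mem_owned sn gen _ oS) l_out (vee_ub oS).
rewrite divr_ge0 ?exprz_ge0 ?(ltW t_gt0) ?(ltW (share_gt0 j)) //=.
rewrite ler_pdivrMr ?share_gt0 //.
apply: le_trans (exprz_le_inv t_gt1 _) _; first by rewrite subr_lt0.
by apply: ler_peMr; [rewrite invr_ge0 ltW | exact: share_ge1].
Qed.

Lemma weight_system_solvable :
  exists x, forall j, x j + \sum_l weight_matrix sigma t j l * x l = (share j)^-1.
Proof.
apply: (near_id_solvable weight_matrix_bound (fun j => (share j)^-1)).
by rewrite ltr_pdivrMr // mul1r; apply: le_lt_trans t_large; have := n_ge1; nra.
Qed.

Section Solution.
Variable x : 'I_n -> R.
Hypothesis x_sol : forall j, x j + \sum_l weight_matrix sigma t j l * x l = (share j)^-1.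

Lemma weight_solution_gt j : t^-1 < x j.
Proof.
have eps_gt0 : 0 < t^-1 by rewrite invr_gt0.
have sum_le : \sum_l `|x l| <= 2 * n%:R.
  apply: le_trans (near_id_sum_le2 weight_matrix_bound x_sol _) _.
    rewrite mulrA ler_pdivrMr // mul1r; apply/ltW; apply: le_lt_trans t_large.
    by have := n_ge1; nra.
  have -> : n%:R = \sum_(l < n) (1 : R) by rewrite sumr_const card_ord.
  rewrite ler_pM2l //; apply: ler_sum => l _.
  by rewrite ger0_norm ?invr_ge0 ?ler0n // invf_le1 ?share_gt0 ?share_ge1.
have share_gt : (2 * n%:R + 1) * t^-1 < (share j)^-1.
  have share_inv : 1 <= (share j)^-1 * n%:R.
    by rewrite mulrC ler_pdivlMr ?mul1r ?share_le ?share_gt0.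
  rewrite -(ltr_pM2r (lt_le_trans ltr01 n_ge1)); apply: lt_le_trans share_inv.
  have : t^-1 * (2 * n%:R ^+ 2 + n%:R) < 1.
    by rewrite -[ltRHS](mulVf (lt0r_neq0 t_gt0)) ltr_pM2l.
  nra.
apply: lt_le_trans (near_id_ge weight_matrix_bound x_sol j).
nra.
Qed.

Local Notation w := (fun j => t ^ (- m j) * x j).

Lemma dot_weights_mem a : a \in sigma -> dotR w (Et t a) = 1.
Proof.
move=> aS; rewrite dotR_Et_shift ?gt_eqF // (bigID (mem (owned sigma a))) /=.
set K := \sum_(j | j \notin owned sigma a) _.
have k_neq0 : #|owned sigma a|%:R != 0 :> R.
  by rewrite pnatr_eq0 -lt0n card_gt0 (owned_neq0 sn gen n_gt0 aS).
have owned_term j :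
    j \in owned sigma a -> t ^ (a j - m j) * x j = (1 - K) / #|owned sigma a|%:R.
  move=> ja; have /eqP-> : a j == m j by rewrite -(mem_owned sn gen _ aS).
  have /eqP own_a : own j == a by rewrite inE in ja.
  have row_j : \sum_l weight_matrix sigma t j l * x l = K / #|owned sigma a|%:R.
    rewrite /K mulr_suml [RHS]big_mkcond; apply: eq_bigr => l _.
    rewrite /weight_matrix own_a /=; case: (l \in owned sigma a); first by rewrite mul0r.
    by rewrite mulrAC.
  have := x_sol j; rewrite row_j own_a => /(canRL (addrK _))->.
  by rewrite subrr expr0z mul1r mulrBl mul1r.
by rewrite (eq_bigr _ owned_term) sumr_const -[(1 - K) / _ *+ _]mulr_natr divfK ?subrK.
Qed.

Lemma dot_weights_not_mem b : A b -> b \notin sigma -> 1 < dotR w (Et t b).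
Proof.
move=> Ab bS; rewrite dotR_Et_shift ?gt_eqF //.
have x_gt0 j : 0 < x j by apply: lt_trans (weight_solution_gt j); rewrite invr_gt0.
have [i m_lt] := sn_not_mem_gt_vee sn Ab bS.
rewrite (bigD1 i) //= -[X in X < _]addr0; apply: ltr_leD; last first.
  by apply: sumr_ge0 => j _; rewrite mulr_ge0 ?exprz_ge0 ?ltW.
apply: lt_le_trans (ler_wpM2r (ltW (x_gt0 i)) (exprz_ge_self t_gt1 _)).
  by rewrite -(mulfV (lt0r_neq0 t_gt0)) ltr_pM2l // weight_solution_gt.
by rewrite subr_gt0.
Qed.

End Solution.

Lemma sn_weights : exists w : 'I_n -> R, [/\ forall j, 0 < w j,
  forall a, a \in sigma -> dotR w (Et t a) = 1 &
  forall b, A b -> b \notin sigma -> 1 < dotR w (Et t b)].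
Proof.
have [x x_sol] := weight_system_solvable.
exists (fun j => t ^ (- m j) * x j); split.
- move=> j; rewrite mulr_gt0 ?exprz_gt0 //.
  by apply: lt_trans (weight_solution_gt x_sol j); rewrite invr_gt0.
- exact: dot_weights_mem.
- exact: dot_weights_not_mem.
Qed.

End Weights.

Section LinearIndependence.
Variables (R : realType) (n : nat) (A : zvec n -> Prop) (sigma : {fset zvec n}) (t : R).
Hypotheses (sn : strongly_neighborly A sigma) (gen : generic A) (t_gt1 : 1 < t).
Variable mu : zvec n -> R.
Hypothesis mu_dep : forall i, \sum_(b <- sigma) mu b * Et t b i = 0.

Local Notation T := (\sum_(b <- sigma) `|mu b|).

Lemma vee_owner_coef_le j : `|mu (vee_owner sigma j)| <= t^-1 * T.
Proof.
have t_gt0 : 0 < t by apply: lt_trans t_gt1.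
have [oS oj] := vee_ownerP sn j.
have shifted : \sum_(b <- sigma) mu b * t ^ (b j - vee sigma j) = 0.
  transitivity (t ^ (- vee sigma j) * \sum_(b <- sigma) mu b * Et t b j); last first.
    by rewrite mu_dep mulr0.
  rewrite mulr_sumr; apply: eq_bigr => b _.
  by rewrite /Et mulrCA -expfzDr ?gt_eqF // addrC.
rewrite (bigD1_seq _ oS) ?fset_uniq //= oj subrr expr0z mulr1 in shifted.
rewrite (canRL (addrK _) shifted) sub0r normrN mulr_sumr.
rewrite (bigD1_seq _ oS) ?fset_uniq //= -[leLHS]add0r.
apply: lerD; first by rewrite mulr_ge0 // invr_ge0 ltW.
apply: le_trans (ler_norm_sum _ _ _) _.
rewrite big_seq_cond [leRHS]big_seq_cond; apply: ler_sum => b /andP[bS b_neq].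
rewrite normrM (ger0_norm (exprz_ge0 _ (ltW t_gt0))) mulrC ler_wpM2r //.
apply: exprz_le_inv => //; rewrite subr_lt0 lt_neqAle (vee_ub bS) andbT.
by apply: contra b_neq => /eqP bj; rewrite (vee_ownerE sn gen bS bj).
Qed.

Lemma sn_lin_indep : (0 < n)%N -> n%:R < t -> forall a, a \in sigma -> mu a = 0.
Proof.
move=> n_gt0 n_lt a aS.
have T0 : T = 0.
  apply: (eq0_le_mul_lt1 (sumr_ge0 _ (fun b _ => normr_ge0 _)) (_ : n%:R * t^-1 < 1)).
    by rewrite ltr_pdivrMr ?mul1r // (lt_trans ltr01 t_gt1).
  apply: le_trans (sum_le_sum_vee_owner sn gen n_gt0 (fun b => normr_ge0 (mu b))) _.
  apply: le_trans (ler_sum _ (fun j _ => vee_owner_coef_le j)) _.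
  by rewrite sumr_const card_ord -mulrA mulr_natl.
apply/normr0_eq0/eqP; rewrite eq_le normr_ge0 andbT -T0.
by rewrite (bigD1_seq _ aS) ?fset_uniq //= lerDl sumr_ge0.
Qed.

End LinearIndependence.

Lemma dotR_conv (R : realType) n (t : R) (w y : 'I_n -> R) (F : {fset zvec n})
    (lam : zvec n -> R) :
  (forall i, y i = \sum_(a <- F) lam a * Et t a i) ->
  dotR w y = \sum_(a <- F) lam a * dotR w (Et t a).
Proof.
move=> y_conv; rewrite /dotR; under eq_bigr do rewrite y_conv mulr_sumr.
rewrite exchange_big; apply: eq_bigr => a _; rewrite mulr_sumr.
by apply: eq_bigr => i _; rewrite mulrCA.
Qed.

Lemma ler_dotR (R : realType) n (w x y : 'I_n -> R) : (forall i, 0 <= w i) ->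
  (forall i, y i <= x i) -> dotR w y <= dotR w x.
Proof. by move=> w_ge0 y_le; apply: ler_sum => i _; rewrite ler_wpM2l. Qed.

Lemma dotR_le_eq (R : realType) n (w x y : 'I_n -> R) : (forall i, 0 < w i) ->
  (forall i, y i <= x i) -> dotR w x <= dotR w y -> forall i, x i = y i.
Proof.
move=> w_gt0 y_le dot_le i; apply/eqP; rewrite -subr_eq0.
have terms_ge0 j : 0 <= w j * (x j - y j) by apply: mulr_ge0; [exact: ltW | rewrite subr_ge0].
have sum0 : \sum_j w j * (x j - y j) = 0.
  apply/eqP; rewrite eq_le sumr_ge0 // andbT.
  by under eq_bigr do rewrite mulrBr; rewrite sumrB subr_le0.
have := psumr_eq0P (fun j _ => terms_ge0 j) sum0 (i := i) isT.
by move/eqP; rewrite mulf_eq0 gt_eqF.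
Qed.

Lemma in_conv_ext (R : realType) n (t : R) (S : zvec n -> Prop) (x y : 'I_n -> R) :
  (forall i, x i = y i) -> in_conv t S y -> in_conv t S x.
Proof.
move=> xy [F [FS [lam [lam_ge0 lam_sum y_conv]]]].
by exists F; split=> //; exists lam; split=> // i; rewrite xy.
Qed.

Section FaceOfWeights.
Variables (R : realType) (n : nat) (A : zvec n -> Prop) (sigma : {fset zvec n}) (t : R).
Hypotheses (sigma_sub : forall a, a \in sigma -> A a) (sigma_neq0 : sigma != fset0%fset).
Variables (w : 'I_n -> R) (c : R).
Hypotheses (w_gt0 : forall i, 0 < w i) (dot_mem : forall a, a \in sigma -> dotR w (Et t a) = c).
Hypothesis dot_not_mem : forall b, A b -> b \notin sigma -> c < dotR w (Et t b).

Local Notation conv_sigma := (in_conv t (fun a => a \in sigma)).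

Lemma dot_ge a : A a -> c <= dotR w (Et t a).
Proof.
by move=> Aa; case: (boolP (a \in sigma)) => [/dot_mem->|/(dot_not_mem Aa)/ltW].
Qed.

Lemma in_conv_dot_ge y : in_conv t A y -> c <= dotR w y.
Proof.
case=> F [FA [lam [lam_ge0 lam_sum y_conv]]].
rewrite (dotR_conv _ y_conv) -[leLHS]mulr1 -lam_sum mulr_sumr big_seq [leRHS]big_seq.
apply: ler_sum => a aF; rewrite mulrC.
by apply: ler_wpM2l; [exact: lam_ge0 | exact/dot_ge/FA].
Qed.

Lemma Pt_dot_ge x : Pt t A x -> c <= dotR w x.
Proof.
case=> y /in_conv_dot_ge dot_y y_le; apply: le_trans dot_y _.
by apply: ler_dotR => // i; apply: ltW.
Qed.

Lemma conv_sigma_dot x : conv_sigma x -> dotR w x = c.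
Proof.
case=> F [Fsigma [lam [_ lam_sum x_conv]]].
rewrite (dotR_conv _ x_conv) -[RHS]mulr1 -lam_sum mulr_sumr big_seq [RHS]big_seq.
by apply: eq_bigr => a aF; rewrite dot_mem ?Fsigma // mulrC.
Qed.

Lemma in_conv_dot_eq y : in_conv t A y -> dotR w y = c -> conv_sigma y.
Proof.
case=> F [FA [lam [lam_ge0 lam_sum y_conv]]] dot_c.
have excess_sum0 : \sum_(a <- F | a \in F) lam a * (dotR w (Et t a) - c) = 0.
  under eq_bigr do rewrite mulrBr.
  by rewrite -big_seq sumrB -(dotR_conv _ y_conv) -mulr_suml lam_sum mul1r dot_c subrr.
have lam0 a : a \in F -> a \notin sigma -> lam a = 0.
  move=> aF aS; move: excess_sum0 => /eqP; rewrite psumr_eq0 => [/allP/(_ a aF)|b bF].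
    by rewrite aF /= mulf_eq0 subr_eq0 (gt_eqF (dot_not_mem (FA a aF) aS)) orbF => /eqP.
  by apply: mulr_ge0; [exact: lam_ge0 | rewrite subr_ge0; exact/dot_ge/FA].
have restrict (f : zvec n -> R) : (forall a, a \in F -> a \notin sigma -> f a = 0) ->
    \sum_(a <- (F `&` sigma)%fset) f a = \sum_(a <- F) f a.
  move=> f0; apply: big_fset_incl => [|a aF]; first exact: fsubsetIl.
  by rewrite in_fsetI aF => /f0->.
exists (F `&` sigma)%fset; split; first by move=> a; rewrite in_fsetI => /andP[].
exists lam; split.
- by move=> a; rewrite in_fsetI => /andP[/lam_ge0].
- by rewrite restrict.
- by move=> i; rewrite y_conv restrict // => a aF aS; rewrite lam0 ?mul0r.
Qed.

Lemma in_hull_of_weights : in_hull t A sigma.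
Proof.
split=> //; exists w, c; split; first exact: Pt_dot_ge.
  move=> x; split=> [x_conv | [[y y_conv y_le] dot_c]].
    split; last exact: conv_sigma_dot.
    exists x => //; case: x_conv => F [Fsigma conv].
    by exists F; split=> // a /Fsigma/sigma_sub.
  have dot_y : dotR w y = c.
    apply: le_anti; rewrite in_conv_dot_ge // andbT -dot_c.
    by apply: ler_dotR => // i; apply: ltW.
  apply: in_conv_ext (dotR_le_eq w_gt0 y_le _) (in_conv_dot_eq y_conv dot_y).
  by rewrite dot_c dot_y.
case/fset0Pn: sigma_neq0 => a aS; exists (Et t a), [fset a]%fset.
split=> [b|]; first by rewrite inE => /eqP->.
exists (fun _ => 1); split=> [b _||i]; first exact: ler01.
  by rewrite big_seq_fset1.
by rewrite big_seq_fset1 mul1r.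
Qed.

End FaceOfWeights.

Lemma aff_indep_fset1 (R : realType) n (t : R) (a : zvec n) : aff_indep t [fset a]%fset.
Proof. by move=> mu; rewrite big_seq_fset1 => mu_a _ b; rewrite inE => /eqP->. Qed.

Lemma zvec0_eq (a b : zvec 0) : a = b.
Proof. by apply/ffunP => -[]. Qed.

Lemma sn_hull_dim0 (R : realType) (t : R) (A : zvec 0 -> Prop) (sigma : {fset zvec 0}) :
  strongly_neighborly A sigma -> in_hull t A sigma /\ aff_indep t sigma.
Proof.
move=> sn; have /fset0Pn[a aS] := sn_neq0 sn; split.
  apply: (in_hull_of_weights (sn_sub sn) (sn_neq0 sn) (w := fun _ => 0) (c := 0)).
  - by case.
  - by move=> b _; rewrite /dotR big_ord0.
  - by move=> b _ bS; rewrite (zvec0_eq b a) aS in bS.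
suff -> : sigma = [fset a]%fset by apply: aff_indep_fset1.
by apply/fsetP => b; rewrite inE (zvec0_eq b a) aS eqxx.
Qed.

Unset Implicit Arguments.

Theorem mainTheorem2 (R : realType) (n : nat) (L A : zvec n -> Prop) :
  antichain_lattice L -> generic A -> lattice_finite L A ->
  exists t0 : R, 1 < t0 /\
    forall t : R, t0 <= t ->
    forall sigma : {fset zvec n}, strongly_neighborly A sigma ->
      in_hull t A sigma /\ aff_indep t sigma.
Proof.
move=> _ gen _.
have [n0 | n_gt0] := posnP n.
  subst n; exists 2; split=> [|t _ sigma sn]; first by rewrite ltr1n.
  exact: sn_hull_dim0.
have n_ge1 : (1 : R) <= n%:R by rewrite ler1n.
exists (2 * n%:R ^+ 2 + n%:R + 1); split=> [|t t_ge sigma sn]; first by nra.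
have t_large : 2 * n%:R ^+ 2 + n%:R < t by apply: lt_le_trans t_ge; rewrite ltrDl.
have [w [w_gt0 dot_mem dot_not_mem]] := sn_weights sn gen n_gt0 t_large.
split; first exact: (in_hull_of_weights (sn_sub sn) (sn_neq0 sn) w_gt0 dot_mem dot_not_mem).
move=> mu _ mu_dep; apply: (sn_lin_indep sn gen _ mu_dep n_gt0); nra.
Qed.
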